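(* Let $m,n\ge 1$, let $\lambda_1,\dots,\lambda_m>0$ and $d_1,\dots,d_n\in\mathbb{R}$, and let $\Phi\in\mathbb{C}^{m\times n}$ be the matrix with entries $\Phi_{kj}=e^{2\pi i d_j/\lambda_k}$. Let $v\in\mathbb{C}^m$, let $\epsilon>0$, and let $C\in\mathbb{R}^{2m\times 2m}$ be a symmetric positive definite (covariance) matrix. For a complex matrix $M\in\mathbb{C}^{m\times n}$ and a complex vector $w\in\mathbb{C}^m$, consider the optimization problem $$P(M,w):\quad \min_{x\in\mathbb{R}^n,\ x\ge 0}\ \|x\|_1 \quad\text{subject to}\quad (\widetilde{M}x-\widetilde{w})^T C^{-1}(\widetilde{M}x-\widetilde{w})\le \epsilon^2\|\widetilde{w}\|^2,$$ where $\widetilde{w}=\begin{pmatrix}\mathrm{Re}\,w\\ \mathrm{Im}\,w\end{pmatrix}\in\mathbb{R}^{2m}$ and $\widetilde{M}=\begin{pmatrix}\mathrm{Re}\,M\\ \mathrm{Im}\,M\end{pmatrix}\in\mathbb{R}^{2m\times n}$ (real and imaginary parts stacked), $x\ge 0$ is meant entrywise, and $\|\cdot\|$ is the Euclidean norm. For $s>0$ and $\Delta\in\mathbb{R}$ define the $m\times m$ complex diagonal matrix $$F_{s,\Delta}=s\cdot\mathrm{diag}\big(e^{-2\pi i\Delta/\lambda_1},\dots,e^{-2\pi i\Delta/\lambda_m}\big).$$ Let $x^*$ be the solution of $P(\Phi,v)$, and let $x^*_{s,\Delta}$ be the solution of $P(F_{s,\Delta}\Phi,\,F_{s,\Delta}v)$.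 Suppose that $C$ is diagonal and satisfies $C_{jj}=C_{j+m,j+m}$ for $j=1,\dots,m$. Then $x^*_{s,\Delta}=x^*$.
   Context: This arises in Time-of-Flight depth sensing: $v$ is the complex sensor measurement at $m$ modulation frequencies, $\lambda_k$ is half the wavelength of the $k$-th modulation frequency, $d_j$ ranges over a discretized set of candidate path distances, and $x$ (the ''backscattering'') gives nonnegative return strengths at those distances, so that ideally $v=\Phi x$ plus Gaussian noise with covariance $C$ on the stacked real representation. *)

From HB Require Import structures.
From mathcomp Require Import all_boot all_order all_algebra.
From mathcomp Require Import all_classical all_reals all_analysis.
From mathcomp Require Import complex.
Set Implicit Arguments. Unset Strict Implicit. Unset Printing Implicit Defensive.
Import Order.TTheory GRing.Theory Num.Theory.
Local Open Scope ring_scope.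
Local Open Scope complex_scope.

Definition expi (R : realType) (t : R) : R[i] := Complex (cos t) (sin t).

Definition tof_matrix (R : realType) (m n : nat) (lam : 'I_m -> R) (d : 'I_n -> R)
  : 'M[R[i]]_(m, n) :=
  \matrix_(k < m, j < n) expi (2 * pi * d j / lam k).

Definition Fmat (R : realType) (m : nat) (lam : 'I_m -> R) (s D : R) : 'M[R[i]]_m :=
  (s%:C) *: diag_mx (\row_(k < m) expi (- (2 * pi * D / lam k))).

Definition stack (R : realType) (m n : nat) (M : 'M[R[i]]_(m, n)) : 'M[R]_(m + m, n) :=
  col_mx (map_mx (@complex.Re R) M) (map_mx (@complex.Im R) M).

Definition l1norm (R : realType) (n : nat) (x : 'cV[R]_n) : R := \sum_(j < n) `|x j 0|.

Definition sqnorm (R : realType) (p : nat) (u : 'cV[R]_p) : R := (u^T *m u) 0 0.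

Definition nonneg_vec (R : realType) (n : nat) (x : 'cV[R]_n) : Prop :=
  forall j, 0 <= x j 0.

Definition feasible (R : realType) (m n : nat) (C : 'M[R]_(m + m)) (eps : R)
  (M : 'M[R[i]]_(m, n)) (w : 'cV[R[i]]_m) (x : 'cV[R]_n) : Prop :=
  nonneg_vec x /\
  let r := stack M *m x - stack w in
  (r^T *m invmx C *m r) 0 0 <= eps ^+ 2 * sqnorm (stack w).

Definition solves (R : realType) (m n : nat) (C : 'M[R]_(m + m)) (eps : R)
  (M : 'M[R[i]]_(m, n)) (w : 'cV[R[i]]_m) (x : 'cV[R]_n) : Prop :=
  feasible C eps M w x /\
  forall y, feasible C eps M w y -> l1norm x <= l1norm y.

Definition sym_posdef (R : realType) (p : nat) (C : 'M[R]_p) : Prop :=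
  C^T = C /\ forall u : 'cV[R]_p, u != 0 -> 0 < (u^T *m C *m u) 0 0.

From HB Require Import structures.
From mathcomp Require Import all_boot all_order all_algebra.
From mathcomp Require Import all_classical all_reals all_analysis.
From mathcomp Require Import complex.
From mathcomp Require Import ring.
Set Implicit Arguments. Unset Strict Implicit. Unset Printing Implicit Defensive.
Import Order.TTheory GRing.Theory Num.Theory.
Local Open Scope ring_scope.
Local Open Scope complex_scope.

(* Unqualified [Re]/[Im] would resolve to the generic parts of a
   numClosedFieldType; [stack] uses the record projections of [R[i]]. *)
Local Notation Re := (@complex.Re _).
Local Notation Im := (@complex.Im _).

(* F_{s,Delta} is diagonal with entries of modulus s, and the residual of
   P(F Phi, F v) at a real x is the stacked form of F (Phi x - v).  On each pair
   (Re, Im) of coordinates F acts as s times a rotation, so a diagonal C with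
   equal weights on each pair sees both the residual and the data scaled by s^2.
   Hence both problems have the same constraint, the same feasible set and the
   same minimizers. *)

Section StackedComplex.
Variable R : realType.

Lemma stackB m n (A B : 'M[R[i]]_(m, n)) : stack (A - B) = stack A - stack B.
Proof.
apply/matrixP => i j; rewrite !mxE.
by case: (fintype.split i) => k; rewrite !mxE; case: (A k j); case: (B k j).
Qed.

Lemma stack_mulmx_real m n (M : 'M[R[i]]_(m, n)) (x : 'cV[R]_n) :
  stack M *m x = stack (M *m map_mx (real_complex R) x).
Proof.
have ReD (a b : R[i]) : Re (a + b) = Re a + Re b by case: a => ? ?; case: b.
have ImD (a b : R[i]) : Im (a + b) = Im a + Im b by case: a => ? ?; case: b.
rewrite /stack mul_col_mx; congr col_mx; apply/matrixP => k j; rewrite !mxE.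
- rewrite (big_morph _ ReD (erefl (Re 0))); apply: eq_bigr => l _.
  by rewrite !mxE; case: (M k l) => a b /=; ring.
- rewrite (big_morph _ ImD (erefl (Im 0))); apply: eq_bigr => l _.
  by rewrite !mxE; case: (M k l) => a b /=; ring.
Qed.

Lemma Re2_Im2_mul (z u : R[i]) :
  Re (z * u) ^+ 2 + Im (z * u) ^+ 2
  = (Re z ^+ 2 + Im z ^+ 2) * (Re u ^+ 2 + Im u ^+ 2).
Proof. by case: z => a b; case: u => c d /=; ring. Qed.

Lemma sum_stack_paired m (u : 'cV[R[i]]_m) (wt : 'I_(m + m) -> R) :
    (forall k, wt (lshift m k) = wt (rshift m k)) ->
  \sum_i stack u i 0 ^+ 2 * wt i
  = \sum_k (Re (u k 0) ^+ 2 + Im (u k 0) ^+ 2) * wt (lshift m k).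
Proof.
move=> wt_pair; rewrite big_split_ord /= -big_split; apply: eq_bigr => k _ /=.
by rewrite /stack col_mxEu col_mxEd !mxE -wt_pair mulrDl.
Qed.

Lemma sum_stack_diag_mul m (z : 'rV[R[i]]_m) (c : R) (u : 'cV[R[i]]_m)
    (wt : 'I_(m + m) -> R) :
    (forall k, Re (z 0 k) ^+ 2 + Im (z 0 k) ^+ 2 = c) ->
    (forall k, wt (lshift m k) = wt (rshift m k)) ->
  \sum_i stack (diag_mx z *m u) i 0 ^+ 2 * wt i
  = c * \sum_i stack u i 0 ^+ 2 * wt i.
Proof.
move=> z_mod wt_pair; rewrite !sum_stack_paired // mulr_sumr.
by apply: eq_bigr => k _; rewrite mul_diag_mx mxE Re2_Im2_mul z_mod mulrA.
Qed.

End StackedComplex.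

Section DiagonalForms.
Variable R : realType.

Lemma diag_form p (u : 'cV[R]_p) (dr : 'rV[R]_p) :
  (u^T *m diag_mx dr *m u) 0 0 = \sum_i u i 0 ^+ 2 * dr 0 i.
Proof. by rewrite mul_mx_diag mxE; apply: eq_bigr => i _; rewrite !mxE; ring. Qed.

Lemma sqnormE p (u : 'cV[R]_p) : sqnorm u = \sum_i u i 0 ^+ 2 * 1.
Proof. by rewrite /sqnorm mxE; apply: eq_bigr => i _; rewrite !mxE; ring. Qed.

Lemma invmx_diag p (C : 'M[R]_p) :
  is_diag_mx C -> (forall i, C i i != 0) -> invmx C = diag_mx (\row_i (C i i)^-1).
Proof.
move=> /diag_mxP [dr ->] dr_neq0.
have CV : diag_mx dr *m diag_mx (\row_i ((diag_mx dr) i i)^-1) = 1%:M.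
  rewrite mulmx_diag; apply/matrixP => i j; rewrite !mxE eqxx mulr1n.
  by have := dr_neq0 i; rewrite !mxE eqxx mulr1n => /divff->.
have [C_unit _] := mulmx1_unit CV.
by rewrite -[LHS]mulmx1 -CV mulmxA mulVmx // mul1mx.
Qed.

Lemma sym_posdef_diag_gt0 p (C : 'M[R]_p) i : sym_posdef C -> 0 < C i i.
Proof.
move=> [_ C_pos]; have ei_neq0 : delta_mx i 0 != 0 :> 'cV[R]_p.
  by apply/eqP => /matrixP /(_ i 0) /eqP; rewrite !mxE !eqxx oner_eq0.
have := C_pos _ ei_neq0; rewrite !mxE (bigD1 i) //= big1 => [|j ji].
  rewrite !mxE (bigD1 i) //= big1 => [|j ji]; last by rewrite !mxE (negbTE ji) mul0r.
  by rewrite !mxE !eqxx !mul1r !addr0 mulr1.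
by rewrite !mxE (negbTE ji) mulr0.
Qed.

End DiagonalForms.

Section DiagonalRescaling.
Variables (R : realType) (m n : nat) (C : 'M[R]_(m + m)) (z : 'rV[R[i]]_m) (c : R).
Hypotheses (C_diag : is_diag_mx C) (C_neq0 : forall i, C i i != 0)
  (C_pair : forall k, C (lshift m k) (lshift m k) = C (rshift m k) (rshift m k))
  (c_gt0 : 0 < c) (z_mod : forall k, Re (z 0 k) ^+ 2 + Im (z 0 k) ^+ 2 = c).

Lemma feasible_diag_mul eps (M : 'M[R[i]]_(m, n)) (w : 'cV[R[i]]_m) (x : 'cV[R]_n) :
  feasible C eps (diag_mx z *m M) (diag_mx z *m w) x <-> feasible C eps M w x.
Proof.
rewrite /feasible /= (invmx_diag C_diag C_neq0) !diag_form !sqnormE.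
rewrite !stack_mulmx_real -!stackB -mulmxA -mulmxBr.
rewrite (sum_stack_diag_mul (wt := (\row_j (C j j)^-1) 0) _ z_mod); last first.
  by move=> k; rewrite !mxE C_pair.
rewrite (sum_stack_diag_mul (wt := fun=> 1) _ z_mod) //.
by rewrite mulrCA ler_pM2l.
Qed.

Lemma solves_diag_mul eps (M : 'M[R[i]]_(m, n)) (w : 'cV[R[i]]_m) (x : 'cV[R]_n) :
  solves C eps (diag_mx z *m M) (diag_mx z *m w) x <-> solves C eps M w x.
Proof.
have feasE y := feasible_diag_mul eps M w y.
by split=> -[/feasE x_feas x_min]; split=> // y /feasE; exact: x_min.
Qed.

End DiagonalRescaling.

Lemma Fmat_diag (R : realType) m (lam : 'I_m -> R) (s D : R) :
  Fmat lam s D = diag_mx (\row_k (s%:C * expi (- (2 * pi * D / lam k)))).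
Proof. by apply/matrixP => i j; rewrite !mxE; case: eqP => _; rewrite ?mulr0 ?mulr1. Qed.

Lemma Re2_Im2_scale_expi (R : realType) (s t : R) :
  Re (s%:C * expi t) ^+ 2 + Im (s%:C * expi t) ^+ 2 = s ^+ 2.
Proof. by rewrite Re2_Im2_mul /= cos2Dsin2 expr0n addr0 mulr1. Qed.

Theorem theorem1 (R : realType) (m n : nat) (hm : (0 < m)%N) (hn : (0 < n)%N)
  (lam : 'I_m -> R) (hlam : forall k, 0 < lam k) (d : 'I_n -> R)
  (v : 'cV[R[i]]_m) (eps : R) (heps : 0 < eps)
  (C : 'M[R]_(m + m)) (hC : sym_posdef C)
  (s D : R) (hs : 0 < s)
  (hdiag : is_diag_mx C)
  (hpair : forall j : 'I_m, C (lshift m j) (lshift m j) = C (rshift m j) (rshift m j)) :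
  forall x : 'cV[R]_n,
    solves C eps (Fmat lam s D *m tof_matrix lam d) (Fmat lam s D *m v) x
    <-> solves C eps (tof_matrix lam d) v x.
Proof.
move=> x; rewrite Fmat_diag; apply: (solves_diag_mul hdiag _ hpair (exprn_gt0 2 hs)).
- by move=> i; rewrite gt_eqF // sym_posdef_diag_gt0.
- by move=> k; rewrite mxE Re2_Im2_scale_expi.
Qed.
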